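(* Let $D$ be a locatable digraph of order $n$. Then $\gamma_{OL}(D)=n$ if and only if $D$ can be constructed as follows. (1) Choose vertex-disjoint directed cycles $C_1,\dots,C_k$ (of orders $n_1+\dots+n_k=n$, loops and 2-cycles allowed) covering $V(D)$; these will be exactly the forcing arcs of $D$. For each vertex $v$, let $f^-(v)$ and $f^+(v)$ be the predecessor and successor of $v$ on its cycle. (2) Choose a partition $V(D)=V_d\cup V_l$ (the domination-forced and the location-forced vertices, respectively). (3) Construct a digraph $\mathcal{H}$ on $V(D)$ which is a disjoint union of vertex-disjoint rooted directed trees, such that the roots of the trees are precisely the vertices $f^+(x)$ with $x\in V_d$, and for every $x\in V_l$, the vertex $f^+(x)$ has an in-neighbour in $\mathcal{H}$. (4) The arc set of $D$ consists of the arcs of $C_1,\dots,C_k$ together with, for each tree $T$ of $\mathcal{H}$ and each vertex $v$ of $T$, an arc from $f^-(v)$ to every descendant of $v$ in $T$.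
   Context: Digraphs are finite and may contain loops; between two distinct vertices there may be arcs in one or both directions, no repeated arcs. $N^-(v)=\{u: uv\text{ is an arc}\}$ (contains $v$ iff $v$ has a loop). An OLD set of $D$ is a set $S\subseteq V(D)$ such that every vertex has an in-neighbour in $S$ and for every two distinct vertices $u,w$ some vertex of $S$ lies in exactly one of $N^-(u),N^-(w)$. $D$ is locatable if it has an OLD set, and then $\gamma_{OL}(D)$ is the minimum size of an OLD set. A vertex $v$ is domination-forced if some vertex $w$ has $N^-(w)=\{v\}$; location-forced if there are distinct vertices $x,y$ with $N^-(x)\ominus N^-(y)=\{v\}$. An arc $xy$ is forcing if $N^-(y)=\{x\}$ or there is a vertex $z$ with $N^-(z)=N^-(y)\setminus\{x\}$. A rooted directed tree is a digraph without loops and directed 2-cycles whose underlying undirected graph is a tree, with a single source (the root) and all arcs oriented away from the root; a single vertex is allowed. The descendants of $v$ in $T$ are the vertices reachable from $v$ by a directed path in $T$. *)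

(* A digraph on a finite vertex type V is given by its arc
   relation a : rel V (a u v <-> uv is an arc; loops allowed). *)
From mathcomp Require Import all_boot.
From mathcomp Require Import fingroup perm.
Set Implicit Arguments. Unset Strict Implicit. Unset Printing Implicit Defensive.

Section Digraphs.
Variable V : finType.

Definition in_nbhd (a : rel V) (v : V) : {set V} := [set u | a u v].

Definition is_OLD (a : rel V) (S : {set V}) : bool :=
  [forall v, exists u in S, u \in in_nbhd a v] &&
  [forall u, forall w, (u != w) ==>
     [exists s in S, (s \in in_nbhd a u) != (s \in in_nbhd a w)]].

Definition locatable (a : rel V) : Prop := exists S, is_OLD a S.

(* minimum size of an OLD set (the default #|V| is never smaller than any
   candidate, so for locatable digraphs this is the true minimum) *)
Definition gamma_OL (a : rel V) : nat :=
  \big[minn/#|V|]_(S : {set V} | is_OLD a S) #|S|.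

(* h is a vertex-disjoint union of rooted directed trees spanning V:
   every vertex has at most one in-neighbour and there is no directed cycle
   (in particular no loops or 2-cycles). *)
Definition rooted_forest (h : rel V) : Prop :=
  (forall v, #|in_nbhd h v| <= 1) /\
  (forall u v, h u v -> ~~ connect h v u).

Definition is_root (h : rel V) (v : V) : bool := in_nbhd h v == set0.

Definition descendant (h : rel V) (v w : V) : bool := connect h v w.

End Digraphs.

(* gamma_OL(D) = n exactly when every vertex x is critical for the family
   {∅} ∪ {N^-(v) : v ∈ V}: two distinct members of the family differ only in x
   (for this family: x is domination- or location-forced). A critical vertex
   lies in every OLD set, and if x is not critical then V - x is an OLD set.
   If every vertex is critical, every x has a w with x ∈ N^-(w) and N^-(w) - x
   in the family. By Bondy's counting argument, if every vertex of X is critical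
   for F then the traces A - X (A ∈ F) number at most |F| - |X|; for
   X = V - {x, y} and the n + 1 sets of the family this leaves at most 3 traces
   on {x, y}, whereas a w shared by x and y yields all 4 through N^-(w),
   N^-(w) - x, N^-(w) - y and ∅. So x ↦ w is a permutation f (the forcing arcs
   are x -> f x), and making the vertex with in-neighbourhood N^-(w) - f^-1(w)
   the parent of w gives a rooted forest in which u -> w is an arc iff w
   descends from f u.
   Conversely, in a digraph built this way N^-(f x) is {x} when f x is a root
   and N^-(p) + x for the parent p of f x otherwise, so every x is critical. *)

From mathcomp Require Import all_boot fingroup perm zify.
Set Implicit Arguments. Unset Strict Implicit. Unset Printing Implicit Defensive.

Lemma geq_bigmin (I : eqType) (r : seq I) (P : pred I) (F : I -> nat) d j :
  j \in r -> P j -> \big[minn/d]_(i <- r | P i) F i <= F j.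
Proof.
elim: r => // i r IHr; rewrite inE big_cons => /predU1P[<- -> | rj Pj].
  exact: geq_minl.
case: ifP => _; last exact: IHr.
exact: leq_trans (geq_minr _ _) (IHr rj Pj).
Qed.

Lemma connect_homo (T : finType) (T' : Type) (e : rel T) (r : rel T') (m : T -> T') :
  reflexive r -> transitive r -> {homo m : x y / e x y >-> r x y} ->
  {homo m : x y / connect e x y >-> r x y}.
Proof.
move=> r_refl r_trans hom x y /connectP[p]; elim: p x => [x _ -> //|z p IHp x].
by case/andP=> exz pz yE; apply: r_trans (hom _ _ exz) (IHp z pz yE).
Qed.

Lemma connect_last (T : finType) (e : rel T) x y :
  connect e x y -> x = y \/ exists2 z, connect e x z & e z y.
Proof.
case/connectP=> p; case/lastP: p => [_ -> | p z]; first by left.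
rewrite rcons_path last_rcons => /andP[px ez] ->; right.
by exists (last x p) => //; apply/connectP; exists p.
Qed.

Section SetFamilies.
Variable T : finType.
Implicit Types (A B X : {set T}) (F : {set {set T}}) (x y : T).

Lemma neq_set_mem A B : A != B -> exists s, (s \in A) != (s \in B).
Proof.
move=> neqAB; apply/existsP; apply: contraNT neqAB => /existsPn eqAB.
by apply/eqP/setP => s; apply/eqP; rewrite -[_ == _]negbK eqAB.
Qed.

Lemma setD1_eq_mem A B x s : A :\ x = B :\ x -> (s \in A) != (s \in B) -> s = x.
Proof. by move/setP/(_ s); rewrite !inE; case: eqP => //= _ ->; rewrite eqxx. Qed.

Definition critical F x : bool :=
  [exists A in F, exists B in F, (A != B) && (A :\ x == B :\ x)].

Lemma criticalP F x :
  reflect (exists A B, [/\ A \in F, B \in F, A != B & A :\ x = B :\ x])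
          (critical F x).
Proof.
apply: (iffP existsP) => [[A /andP[FA /existsP[B /and3P[FB neqAB /eqP eqABx]]]]|].
  by exists A, B.
case=> A [B [FA FB neqAB eqABx]]; exists A; rewrite FA /=.
by apply/existsP; exists B; rewrite FB neqAB eqABx eqxx.
Qed.

Lemma critical_setD1 F x y :
  critical F y -> y != x -> critical [set A :\ x | A in F] y.
Proof.
case/criticalP=> A [B [FA FB neqAB eqABy]] yx; apply/criticalP.
exists (A :\ x), (B :\ x); split; [exact: imset_f | exact: imset_f | |].
  have [s dAB] := neq_set_mem neqAB; have sy := setD1_eq_mem eqABy dAB; subst s.
  by move: dAB; apply: contra_neq => /setP/(_ y); rewrite !inE yx.
by rewrite !setDDl setUC -!setDDl eqABy.
Qed.

Lemma card_imset_setD1_critical F x :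
  critical F x -> #|[set A :\ x | A in F]| < #|F|.
Proof.
case/criticalP=> A [B [FA FB neqAB eqABx]].
rewrite ltn_neqAle leq_imset_card andbT.
by move: neqAB; apply: contra_neq => /eqP/imset_injP; apply.
Qed.

Lemma card_critical_traces F X :
  {in X, forall x, critical F x} -> #|X| + #|[set A :\: X | A in F]| <= #|F|.
Proof.
move Dn: #|X| => n; elim: n X F Dn => [|n IHn] X F cardX critX.
  by rewrite (cards0_eq cardX) add0n leq_imset_card.
have [x Xx] : exists x, x \in X by apply/card_gt0P; rewrite cardX.
have cardXx : #|X :\ x| = n by move: cardX; rewrite (cardsD1 x) Xx => -[].
have critXx : {in X :\ x, forall y, critical [set A :\ x | A in F] y}.
  by move=> y /setD1P[yx Xy]; apply: critical_setD1 (critX y Xy) yx.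
have traces_setD1 :
    [set A :\: (X :\ x) | A in [set A :\ x | A in F]] = [set A :\: X | A in F].
  by rewrite -imset_comp; apply: eq_imset => A /=; rewrite setDDl setD1K.
have := IHn _ _ cardXx critXx; rewrite traces_setD1 addSn => le_traces.
exact: leq_ltn_trans le_traces (card_imset_setD1_critical (critX x Xx)).
Qed.

End SetFamilies.

Section NeighbourhoodFamily.
Variables (V : finType) (a : rel V).
Local Notation N := (in_nbhd a).
Implicit Types (S A B : {set V}) (u v w x : V).

Definition nbhd_family : {set {set V}} := set0 |: [set N v | v : V].

Lemma set0_nbhd_family : set0 \in nbhd_family.
Proof. exact: setU11. Qed.

Lemma mem_nbhd_family v : N v \in nbhd_family.
Proof. by apply/setU1P; right; apply: imset_f. Qed.

Lemma locatable_nbhd_neq0 v : locatable a -> N v != set0.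
Proof.
case=> S /andP[/forallP/(_ v)/existsP[u /andP[_ uv]] _].
by apply/set0Pn; exists u.
Qed.

Lemma locatable_nbhd_inj : locatable a -> injective N.
Proof.
case=> S /andP[_ /forallP loc] u w eqN; apply/eqP; apply: contraT => uw.
have /existsP[s /andP[_]] := implyP (forallP (loc u) w) uw.
by rewrite eqN eqxx.
Qed.

Lemma card_nbhd_family : locatable a -> #|nbhd_family| = #|V|.+1.
Proof.
move=> loc; have N0 : set0 \notin [set N v | v : V].
  by apply/imsetP => -[v _ /esym/eqP]; apply/negP/locatable_nbhd_neq0.
by rewrite cardsU1 N0 card_imset //; apply: locatable_nbhd_inj.
Qed.

Lemma OLD_separates S A B :
    is_OLD a S -> A \in nbhd_family -> B \in nbhd_family -> A != B ->
  exists2 s, s \in S & (s \in A) != (s \in B).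
Proof.
case/andP=> /forallP dom /forallP loc.
have sep_nbhd C v : C \in nbhd_family -> C != N v ->
    exists2 s, s \in S & (s \in C) != (s \in N v).
  case/setU1P=> [-> _ | /imsetP[u _ ->] neqN].
    by have /existsP[s /andP[Ss sv]] := dom v; exists s; rewrite // in_set0 sv.
  have uv : u != v by apply: contraNneq neqN => ->.
  by have /existsP[s /andP[Ss dN]] := implyP (forallP (loc u) v) uv; exists s.
move=> FA /setU1P[-> neqA0 | /imsetP[v _ ->]]; last exact: sep_nbhd.
case/setU1P: FA neqA0 => [-> | /imsetP[u _ ->]]; first by rewrite eqxx.
rewrite eq_sym => /(sep_nbhd _ _ set0_nbhd_family)[s Ss dN].
by exists s; rewrite // eq_sym.
Qed.

Lemma separates_OLD S :
    locatable a ->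
    (forall A B, A \in nbhd_family -> B \in nbhd_family -> A != B ->
       exists2 s, s \in S & (s \in A) != (s \in B)) ->
  is_OLD a S.
Proof.
move=> loc sep; apply/andP; split.
  apply/forallP => v; have [|s Ss] := sep _ _ set0_nbhd_family (mem_nbhd_family v).
    by rewrite eq_sym locatable_nbhd_neq0.
  by rewrite in_set0; case sv: (s \in N v) => // _; apply/existsP; exists s; rewrite Ss.
apply/forallP => u; apply/forallP => w; apply/implyP => uw.
have [|s Ss dN] := sep _ _ (mem_nbhd_family u) (mem_nbhd_family w).
  by rewrite (inj_eq (locatable_nbhd_inj loc)).
by apply/existsP; exists s; rewrite Ss.
Qed.

Lemma critical_mem_OLD S x :
  is_OLD a S -> critical nbhd_family x -> x \in S.
Proof.
move=> OS /criticalP[A [B [FA FB neqAB eqABx]]].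
have [s Ss dAB] := OLD_separates OS FA FB neqAB.
by rewrite -(setD1_eq_mem eqABx dAB).
Qed.

Lemma OLD_setC1 x : locatable a -> ~~ critical nbhd_family x -> is_OLD a [set~ x].
Proof.
move=> loc ncrit; apply: separates_OLD loc _ => A B FA FB neqAB.
have neqABx : A :\ x != B :\ x.
  by apply: contraNneq ncrit => eqABx; apply/criticalP; exists A, B.
have [s dABx] := neq_set_mem neqABx.
have sx : s != x by apply: contraNneq dABx => ->; rewrite !setD11.
by exists s; move: dABx; rewrite !inE sx.
Qed.

Lemma gamma_OL_le S : is_OLD a S -> gamma_OL a <= #|S|.
Proof. exact: geq_bigmin (mem_index_enum S). Qed.

Lemma gamma_OL_eq_card :
  locatable a -> gamma_OL a = #|V| <-> forall x, critical nbhd_family x.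
Proof.
move=> loc; split=> [gam x | crit].
  apply: contraT => ncrit; have := gamma_OL_le (OLD_setC1 loc ncrit).
  have V_gt0 : 0 < #|V| by apply/card_gt0P; exists x.
  by rewrite gam cardsC1 -ltnS prednK // ltnn.
rewrite /gamma_OL; apply: (big_ind (fun m => m = #|V|)) => //.
  by move=> _ _ -> ->; apply: minnn.
move=> S OS; have -> : S = [set: V].
  by apply/setP => x; rewrite inE (critical_mem_OLD OS (crit x)).
exact: cardsT.
Qed.

Lemma critical_nbhd_setD1 x :
  critical nbhd_family x ->
  exists w, (x \in N w) && (N w :\ x \in nbhd_family).
Proof.
case/criticalP=> A [B [FA FB neqAB eqABx]].
have [s dAB] := neq_set_mem neqAB; have sx := setD1_eq_mem eqABx dAB; subst s.
wlog xB : A B FA FB eqABx dAB {neqAB} / x \in B.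
  move=> wl; case xB: (x \in B); first exact: (wl A B).
  apply: (wl B A) => //; first by rewrite eq_sym.
  by move: dAB; rewrite xB; case: (x \in A).
case/setU1P: FB xB eqABx dAB => [-> | /imsetP[w _ ->] xw eqABx dAB].
  by rewrite in_set0.
have xA : x \notin A by move: dAB; rewrite xw; case: (x \in A).
have eqA : A = N w :\ x.
  rewrite -eqABx; apply/setP => z; rewrite !inE.
  by case: eqVneq => // ->; rewrite (negbTE xA).
by exists w; rewrite xw -eqA.
Qed.

End NeighbourhoodFamily.

Section ForcedDigraphStructure.
Variables (V : finType) (a : rel V).
Hypotheses (a_loc : locatable a) (a_crit : forall x, critical (nbhd_family a) x).
Local Notation N := (in_nbhd a).
Local Notation Fam := (nbhd_family a).

Definition forcing_succ x : V := xchoose (critical_nbhd_setD1 (a_crit x)).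

Lemma forcing_succP x :
  (x \in N (forcing_succ x)) && (N (forcing_succ x) :\ x \in Fam).
Proof. exact: xchooseP (critical_nbhd_setD1 (a_crit x)). Qed.

Lemma forcing_succ_inj : injective forcing_succ.
Proof.
move=> x y eq_succ; apply/eqP; apply: contraT => neq_xy.
move: (forcing_succP x) (forcing_succP y); rewrite eq_succ; set w := forcing_succ y.
move=> /andP[xw Fwx] /andP[yw Fwy].
pose X := ~: [set x; y].
have cardX : 2 + #|X| = #|V| by rewrite -(cardsC [set x; y]) cards2 neq_xy.
have trXx A : (x \in A :\: X) = (x \in A) by rewrite !inE eqxx.
have trXy A : (y \in A :\: X) = (y \in A) by rewrite !inE eqxx orbT.
have traces4 : 4 <= #|[set A :\: X | A in Fam]|.
  have <- : #|[set: bool * bool]| = 4 by rewrite cardsT card_prod card_bool.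
  apply: (leq_trans _ (leq_imset_card (fun A : {set V} => (x \in A, y \in A)) _)).
  rewrite -imset_comp.
  apply/subset_leq_card/subsetP => -[[] []] _; apply/imsetP.
  - by exists (N w); rewrite ?mem_nbhd_family //= trXx trXy xw yw.
  - by exists (N w :\ y); rewrite //= trXx trXy !in_setD1 eqxx neq_xy xw.
  - by exists (N w :\ x); rewrite //= trXx trXy !in_setD1 eqxx eq_sym neq_xy yw.
  - by exists set0; rewrite ?set0_nbhd_family //= trXx trXy !in_set0.
have := card_critical_traces (fun z _ => a_crit z) (X := X).
rewrite card_nbhd_family //; lia.
Qed.

Definition forcing_perm : {perm V} := perm forcing_succ_inj.
Local Notation f := forcing_perm.

Lemma permV_nbhdP w : ((f^-1)%g w \in N w) && (N w :\ (f^-1)%g w \in Fam).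
Proof.
by have := forcing_succP ((f^-1)%g w); rewrite -(permE forcing_succ_inj) permKV.
Qed.

Lemma mem_permV_nbhd w : (f^-1)%g w \in N w.
Proof. by case/andP: (permV_nbhdP w). Qed.

Definition nbhd_forest : rel V := [rel u w | N u == N w :\ (f^-1)%g w].

Lemma nbhd_forest_parent w :
  N w :\ (f^-1)%g w != set0 -> exists u, nbhd_forest u w.
Proof.
case/andP: (permV_nbhdP w) => _ /setU1P[-> | /imsetP[u _ eqN] _].
  by rewrite eqxx.
by exists u; rewrite /nbhd_forest /= eqN.
Qed.

Lemma nbhd_forest_ltn u w : nbhd_forest u w -> #|N u| < #|N w|.
Proof. by move=> /eqP ->; rewrite [#|N w|](cardsD1 ((f^-1)%g w)) mem_permV_nbhd. Qed.

Lemma nbhd_forest_subset u w : connect nbhd_forest u w -> N u \subset N w.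
Proof.
apply: (connect_homo (r := fun A B : {set V} => A \subset B)).
- exact: subxx.
- by move=> B A C; apply: subset_trans.
- by move=> p q /eqP ->; apply: subsetDl.
Qed.

Lemma rooted_nbhd_forest : rooted_forest nbhd_forest.
Proof.
split=> [w | u w huw].
  apply/card_le1_eqP => u1 u2; rewrite !inE => /eqP N1 /eqP N2.
  by apply: (locatable_nbhd_inj a_loc); rewrite N1 N2.
apply/negP => /nbhd_forest_subset/subset_leq_card.
by rewrite leqNgt nbhd_forest_ltn.
Qed.

Lemma mem_nbhd_forest u w : (u \in N w) = connect nbhd_forest (f u) w.
Proof.
apply/idP/idP => [|/nbhd_forest_subset/subsetP]; last first.
  by apply; have := mem_permV_nbhd (f u); rewrite permK.
have [k] := ubnP #|N w|; elim: k w => // k IHk w le_wk uw.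
have [-> | neq_u] := eqVneq u ((f^-1)%g w); first by rewrite permKV connect0.
have [p hpw] : exists p, nbhd_forest p w.
  by apply: nbhd_forest_parent; apply/set0Pn; exists u; rewrite in_setD1 neq_u.
apply: connect_trans (connect1 hpw); apply: IHk.
  exact: leq_trans (nbhd_forest_ltn hpw) le_wk.
by move/eqP: hpw => ->; rewrite in_setD1 neq_u.
Qed.

End ForcedDigraphStructure.

Section CycleForestDigraph.
Variables (V : finType) (a : rel V) (f : {perm V}) (h : rel V).
Hypotheses (h_forest : rooted_forest h)
           (a_arcs : forall u w, a u w <-> connect h (f u) w).
Local Notation N := (in_nbhd a).

Lemma mem_nbhd_cycle_forest u w : (u \in N w) = connect h (f u) w.
Proof. by rewrite inE; apply/idP/idP => /a_arcs. Qed.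

Lemma forest_parent_uniq p q w : h p w -> h q w -> p = q.
Proof. by move=> hpw hqw; apply: (card_le1_eqP (h_forest.1 w)); rewrite inE. Qed.

Lemma connect_parent p v w : h p w -> connect h v w = (v == w) || connect h v p.
Proof.
move=> hpw; apply/idP/idP.
  case/connect_last => [-> | [q vq hqw]]; first by rewrite eqxx.
  by rewrite -(forest_parent_uniq hqw hpw) vq orbT.
case/predU1P => [-> | vp]; first exact: connect0.
exact: connect_trans vp (connect1 hpw).
Qed.

Lemma nbhd_root w : is_root h w -> N w = [set (f^-1)%g w].
Proof.
move=> /eqP/setP root_w; apply/setP => u.
rewrite mem_nbhd_cycle_forest in_set1 -(inj_eq (@perm_inj _ f)) permKV.
apply/idP/eqP => [/connect_last[// | [q _ hqw]] | ->]; last exact: connect0.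
by have := root_w q; rewrite !inE hqw.
Qed.

Lemma nbhd_parent p w : h p w -> N p = N w :\ (f^-1)%g w.
Proof.
move=> hpw; apply/setP => u.
rewrite in_setD1 !mem_nbhd_cycle_forest (connect_parent _ hpw).
rewrite -(inj_eq (@perm_inj _ f)) permKV; case: eqVneq => [-> | _] //=.
exact/negbTE/(h_forest.2 _ _ hpw).
Qed.

Lemma cycle_forest_critical x : critical (nbhd_family a) x.
Proof.
have Nfx : x \in N (f x) by rewrite mem_nbhd_cycle_forest connect0.
apply/criticalP; have [root_fx | /set0Pn[p]] := boolP (is_root h (f x)).
  exists set0, (N (f x)); split; rewrite ?set0_nbhd_family ?mem_nbhd_family //.
    by rewrite eq_sym; apply/set0Pn; exists x.
  by rewrite nbhd_root // permK set0D setDv.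
rewrite inE => hp; exists (N p), (N (f x)); split; rewrite ?mem_nbhd_family //.
  by rewrite (nbhd_parent hp) permK; apply/eqP => /setP/(_ x); rewrite setD11 Nfx.
by rewrite (nbhd_parent hp) permK setDDl setUid.
Qed.

End CycleForestDigraph.

Lemma cycle_forest_arcsE (V : finType) (a h : rel V) (f : {perm V}) :
  (forall u w, a u w <-> w = f u \/ exists v, u = (f^-1)%g v /\ descendant h v w) <->
  (forall u w, a u w <-> connect h (f u) w).
Proof.
have arcE u w :
    (w = f u \/ exists v, u = (f^-1)%g v /\ descendant h v w) <-> connect h (f u) w.
  split=> [[-> | [v [-> hvw]]] | fuw]; [exact: connect0 | by rewrite permKV | ].
  by right; exists (f u); rewrite permK.
by split=> arcs u w; split=> [/arcs/arcE | /arcE/arcs].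
Qed.

Theorem theorem18 (V : finType) (a : rel V) :
  locatable a ->
  gamma_OL a = #|V| <->
  exists (f : {perm V}) (Vd : {set V}) (h : rel V),
    [/\ rooted_forest h,
        (forall r, is_root h r <-> exists2 x, x \in Vd & r = f x),
        (forall x, x \notin Vd -> ~~ is_root h (f x)) &
        (forall u w, a u w <->
           (w = f u \/ exists v, u = (f^-1)%g v /\ descendant h v w))].
Proof.
move=> loc; rewrite gamma_OL_eq_card //.
split=> [crit | [f [Vd [h [h_forest _ _ /cycle_forest_arcsE a_arcs]]]] x].
  pose f := forcing_perm loc crit; pose h := nbhd_forest loc crit.
  exists f, [set x | is_root h (f x)], h; split.
  - exact: rooted_nbhd_forest.
  - move=> r; split=> [root_r | [x + ->]]; last by rewrite inE.
    by exists ((f^-1)%g r); rewrite ?inE permKV.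
  - by move=> x; rewrite inE.
  - by apply/cycle_forest_arcsE => u w; rewrite -mem_nbhd_forest inE.
exact: cycle_forest_critical h_forest a_arcs x.
Qed.
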